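(* Suppose the jobs are indexed so that $e_1\ge e_2\ge\dots\ge e_n$, where $e_j=w_j/p_j$. Let $\sigma$ be a proper schedule and $\sigma'$ the intermediate schedule obtained from $\sigma$ by an admissible swap at some step $j^*$ between machines $M_h$ and $M_i$. Then $\sum_j w_jC_j(\sigma')\le\sum_j w_jC_j(\sigma)$.
   Context: Jobs $J=\{1,\dots,n\}$, job $j$ with positive integer processing time $p_j$ and nonnegative integer weight $w_j$, are scheduled non-preemptively on $m$ identical machines $M_1,\dots,M_m$; $p_{\max}=\max_j p_j$, $P(X)=\sum_{j\in X}p_j$. A proper schedule $\sigma$ is a partition $J=J_1(\sigma)\cup\dots\cup J_m(\sigma)$, the jobs of $J_i(\sigma)$ processed on $M_i$ consecutively from time $0$ without idle time in increasing index order; $C_j(\sigma)$ is the completion time of $j$. $J_j=\{1,\dots,j\}$, $J_{i,j}(\sigma)=J_i(\sigma)\cap J_j$, $\Delta_{h,i,j}(\sigma)=P(J_{h,j}(\sigma))-P(J_{i,j}(\sigma))$. The swap: admissible for proper $\sigma$ at step $j^*$ with machines $M_h,M_i$ if $j^*\in J_h(\sigma)$, $|J_i(\sigma)\setminus J_{i,j^*}(\sigma)|\ge 2p_{\max}$, and $\Delta_{h,i,j^*}(\sigma)\ge 4p_{\max}^2$. Let $J_I$ be the first (smallest-index) $2p_{\max}$ jobs of $J_i(\sigma)\setminus J_{i,j^*}(\sigma)$ and $J_H$ the last (largest-index) $2p_{\max}$ jobs of $J_{h,j^*}(\sigma)$; choose non-empty $J_{H'}\subseteq J_H$, $J_{I'}\subseteq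 J_I$ with $P(J_{H'})=P(J_{I'})$. The intermediate schedule $\sigma'$: on $M_h$ the time interval occupied by $J_H$ in $\sigma$ is filled by $J_H\setminus J_{H'}$ then $J_{I'}$; on $M_i$ the interval occupied by $J_I$ is filled by $J_{H'}$ then $J_I\setminus J_{I'}$ (each group in its order in $\sigma$); all other jobs keep their positions. *)

From mathcomp Require Import all_boot all_order all_algebra.
Set Implicit Arguments. Unset Strict Implicit. Unset Printing Implicit Defensive.
Import Order.TTheory GRing.Theory Num.Theory.

(* Jobs are 'I_n : the job numbered k+1 in the paper is the ordinal k,
   so the index order is the order of ordinals.  Machines are 'I_m. *)

Section Sched.
Variables (n m : nat) (p w : 'I_n -> nat).

Definition pmax : nat := \max_(j : 'I_n) p j.

Definition Pseq (s : seq 'I_n) : nat := \sum_(k <- s) p k.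

Definition eratio (j : 'I_n) : rat := ((w j)%:R / (p j)%:R)%R.

(* A proper schedule is given by the assignment sigma of jobs to machines
   (i.e. the partition J = J_1 u ... u J_m); the jobs of machine i are
   processed in increasing index order. *)
Definition jobs_on (sigma : {ffun 'I_n -> 'I_m}) (i : 'I_m) : seq 'I_n :=
  [seq j <- enum 'I_n | sigma j == i].

(* A general (not necessarily proper) schedule: assignment a and, for each
   machine, the sequence of its jobs processed consecutively from time 0
   without idle time. *)
Definition compl (a : 'I_n -> 'I_m) (seqs : 'I_m -> seq 'I_n) (j : 'I_n) : nat :=
  Pseq (take (index j (seqs (a j))).+1 (seqs (a j))).

Definition C (sigma : {ffun 'I_n -> 'I_m}) (j : 'I_n) : nat :=
  compl sigma (jobs_on sigma) j.

Definition wsum (a : 'I_n -> 'I_m) (seqs : 'I_m -> seq 'I_n) : nat :=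
  \sum_(j : 'I_n) w j * compl a seqs j.

Section Swap.
Variables (sigma : {ffun 'I_n -> 'I_m}) (jstar : 'I_n) (h i : 'I_m).

Definition before (k : 'I_m) : seq 'I_n := [seq j : 'I_n <- jobs_on sigma k | (j <= jstar)%N].
Definition after (k : 'I_m) : seq 'I_n := [seq j : 'I_n <- jobs_on sigma k | (jstar < j)%N].

Definition JI : seq 'I_n := take (2 * pmax) (after i).
Definition JH : seq 'I_n := drop (size (before h) - 2 * pmax) (before h).

Definition admissible : Prop :=
  [/\ sigma jstar = h,
      2 * pmax <= size (after i) &
      Pseq (before i) + 4 * pmax ^ 2 <= Pseq (before h)]%N.

Definition valid_choice (H' I' : {set 'I_n}) : Prop :=
  [/\ H' \subset [set x | x \in JH], I' \subset [set x | x \in JI],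
      H' != set0, I' != set0 &
      Pseq (enum H') = Pseq (enum I')].

Definition swap_assign (H' I' : {set 'I_n}) (j : 'I_n) : 'I_m :=
  if j \in H' then i else if j \in I' then h else sigma j.

Definition swap_seqs (H' I' : {set 'I_n}) (k : 'I_m) : seq 'I_n :=
  if k == h then
    take (size (before h) - 2 * pmax) (before h)
      ++ [seq j <- JH | j \notin H'] ++ [seq j <- JI | j \in I'] ++ after h
  else if k == i then
    before i ++ [seq j <- JH | j \in H'] ++ [seq j <- JI | j \notin I']
      ++ drop (2 * pmax) (after i)
  else jobs_on sigma k.

End Swap.
End Sched.

(* Write w_j = r p_j + d_j with r = e_{j*}, so that d_j >= 0 on J_H (jobs up
   to j* ) and d_j <= 0 on J_I (jobs after j* ).  On one machine,
   sum_j p_j C_j = (P^2 + sum_j p_j^2) / 2 only depends on the set of jobs;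
   the swap preserves both machine loads and the jobs of the two machines
   together, so the r-part of the objective does not change.  For the d-part,
   J_{H'} moves to a block of M_i starting at least 4 p_max^2 - P(J_H) >=
   2 p_max^2 earlier, and J_{I'} moves correspondingly later; since both blocks
   have length at most 2 p_max^2, this dominates the effect of reordering jobs
   inside the blocks. *)

From mathcomp Require Import all_boot all_order all_algebra.
From mathcomp Require Import ring lra zify.
Set Implicit Arguments. Unset Strict Implicit. Unset Printing Implicit Defensive.
Import Order.TTheory GRing.Theory Num.Theory.

Local Open Scope ring_scope.

Section MachineCost.
Variables (R : realDomainType) (T : Type) (p : T -> R).
Implicit Types (f g : T -> R) (a : pred T) (s : seq T) (t : R).

Definition total f s : R := \sum_(x <- s) f x.

(* [cost f s] is sum_j f_j C_j for a machine processing [s] in order: the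
   head job delays itself and every later job by its processing time. *)
Fixpoint cost f s : R :=
  if s is x :: s' then p x * (f x + total f s') + cost f s' else 0.

(* The same when the machine only starts processing [s] at time [t]. *)
Definition cost_from t f s : R := cost f s + t * total f s.

Definition restrict a f x : R := if a x then f x else 0.

Lemma total_cons f x s : total f (x :: s) = f x + total f s.
Proof. exact: big_cons. Qed.

Lemma total_cat f s1 s2 : total f (s1 ++ s2) = total f s1 + total f s2.
Proof. exact: big_cat. Qed.

Lemma total_filterC f a s :
  total f (filter a s) + total f (filter (predC a) s) = total f s.
Proof. by rewrite /total !big_filter [in RHS](bigID a). Qed.

Lemma total_restrict f a s : total (restrict a f) s = total f (filter a s).
Proof. by rewrite /total big_filter [RHS]big_mkcond. Qed.

Lemma total_lin t f g h s : (forall x, h x = t * f x + g x) ->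
  total h s = t * total f s + total g s.
Proof.
by move=> hE; rewrite /total mulr_sumr -big_split; apply: eq_bigr => x _; exact: hE.
Qed.

Lemma cost_lin t f g h s : (forall x, h x = t * f x + g x) ->
  cost h s = t * cost f s + cost g s.
Proof.
move=> hE; elim: s => [|x s IH] /=; first by ring.
by rewrite IH hE (total_lin s hE); ring.
Qed.

Lemma cost_from_lin t0 t f g h s : (forall x, h x = t * f x + g x) ->
  cost_from t0 h s = t * cost_from t0 f s + cost_from t0 g s.
Proof. by move=> hE; rewrite /cost_from (cost_lin s hE) (total_lin s hE); ring. Qed.

Lemma cost_restrictC f a s :
  cost (restrict a f) s + cost (restrict (predC a) f) s = cost f s.
Proof.
elim: s => [|x s IH] /=; first by rewrite addr0.
rewrite -IH !total_restrict -(total_filterC f a s) /restrict /=.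
by case: (a x) => /=; ring.
Qed.

Lemma cost_cat f s1 s2 :
  cost f (s1 ++ s2) = cost f s1 + cost_from (total p s1) f s2.
Proof.
rewrite /cost_from; elim: s1 => [|x s1 IH] /=; first by rewrite /total big_nil; ring.
by rewrite IH total_cat total_cons; ring.
Qed.

Lemma cost_replace f A M M' B : total p M' = total p M ->
  cost f (A ++ M' ++ B) =
    cost f (A ++ M ++ B) + cost_from (total p A) f M' - cost_from (total p A) f M.
Proof. by move=> PM; rewrite !cost_cat /cost_from !cost_cat !total_cat PM; ring. Qed.

Lemma cost_self s : 2 * cost p s = total p s ^+ 2 + total (fun x => p x ^+ 2) s.
Proof.
elim: s => [|x s IH] /=; first by rewrite /total !big_nil; ring.
by rewrite !total_cons mulrDr IH; ring.
Qed.

Lemma total_ge0 f s : all (fun x => 0 <= f x) s -> 0 <= total f s.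
Proof.
elim: s => [|x s IH] /=; first by rewrite /total big_nil.
by case/andP=> fx fs; rewrite total_cons addr_ge0 ?IH.
Qed.

Lemma total_le0 f s : all (fun x => f x <= 0) s -> total f s <= 0.
Proof.
elim: s => [|x s IH] /=; first by rewrite /total big_nil.
case/andP=> fx fs; rewrite total_cons; have := IH fs; lra.
Qed.

Hypothesis p_ge0 : forall x, 0 <= p x.

Lemma total_p_ge0 s : 0 <= total p s.
Proof. by rewrite /total sumr_ge0. Qed.

Lemma cost_ge0 f s : all (fun x => 0 <= f x) s -> 0 <= cost f s.
Proof.
elim: s => //= x s IH /andP[fx fs].
have := IH fs; have := total_ge0 fs; have := p_ge0 x; nra.
Qed.

Lemma cost_le0 f s : all (fun x => f x <= 0) s -> cost f s <= 0.
Proof.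
elim: s => //= x s IH /andP[fx fs].
have := IH fs; have := total_le0 fs; have := p_ge0 x; nra.
Qed.

Lemma cost_le_total f s :
  all (fun x => 0 <= f x) s -> cost f s <= total p s * total f s.
Proof.
elim: s => [|x s IH] /=; first by rewrite /total big_nil mul0r.
case/andP=> fx fs; rewrite !total_cons.
have := IH fs; have := total_p_ge0 s; nra.
Qed.

Lemma total_le_cost f s :
  all (fun x => f x <= 0) s -> total p s * total f s <= cost f s.
Proof.
elim: s => [|x s IH] /=; first by rewrite /total big_nil mul0r.
case/andP=> fx fs; rewrite !total_cons.
have := IH fs; have := total_p_ge0 s; nra.
Qed.

Lemma cost_filter_le f a s :
  all (fun x => 0 <= f x) s -> cost f (filter a s) <= cost (restrict a f) s.
Proof.
elim: s => //= x s IH /andP[fx fs].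
have fas : all (fun y => 0 <= f y) (filter a s).
  by rewrite all_filter; apply: sub_all fs => y /= ->; rewrite implybT.
have := IH fs; have := total_ge0 fas; have := p_ge0 x.
by rewrite total_restrict /restrict; case: (a x) => /=; nra.
Qed.

Lemma cost_restrict_ge f a s : all (fun x => f x <= 0) s ->
  cost f (filter a s) + total p (filter (predC a) s) * total f (filter a s)
    <= cost (restrict a f) s.
Proof.
elim: s => [|x s IH] /=; first by rewrite /total big_nil; lra.
case/andP=> fx fs; have := IH fs; have := total_p_ge0 (filter (predC a) s).
by rewrite total_restrict /restrict; case: (a x) => /=; rewrite !total_cons; nra.
Qed.

Lemma cost_from_exchange d M N a b tM tN :
  all (fun x => 0 <= d x) M -> all (fun x => d x <= 0) N ->
  tN + total p N <= tM -> tN + total p (filter a M) <= tM ->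
  total p (filter a M) = total p (filter b N) ->
  cost_from tM d (filter (predC a) M ++ filter b N)
    + cost_from tN d (filter a M ++ filter (predC b) N)
  <= cost_from tM d M + cost_from tN d N.
Proof.
move=> dM dN gapN.
rewrite /cost_from !cost_cat /cost_from !total_cat.
rewrite -(cost_restrictC d a M) -(cost_restrictC d b N).
rewrite -(total_filterC d a M) -(total_filterC d b N).
set X1 := filter (predC a) M; set X2 := filter a M.
set Y1 := filter b N; set Y2 := filter (predC b) N => gapM PMN.
have dX2 : all (fun x => 0 <= d x) X2.
  by rewrite all_filter; apply: sub_all dM => y /= ->; rewrite implybT.
have dY1 : all (fun x => d x <= 0) Y1.
  by rewrite all_filter; apply: sub_all dN => y /= ->; rewrite implybT.
have stay_h : cost d X1 <= cost (restrict (predC a) d) M by exact: cost_filter_le.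
have moved_h : cost d X2 <= total p X2 * total d X2 by exact: cost_le_total.
have rest_h : 0 <= cost (restrict a d) M.
  by apply/cost_ge0/(sub_all _ dM) => y; rewrite /restrict; case: (a y).
have moved_i : cost d Y1 <= 0 by exact: cost_le0.
have rest_i : total p N * total d Y1 <= cost (restrict b d) N.
  rewrite -total_restrict; apply/total_le_cost/(sub_all _ dN) => y.
  by rewrite /restrict; case: (b y).
have stay_i : cost d Y2 + total p Y1 * total d Y2 <= cost (restrict (predC b) d) N.
  have := cost_restrict_ge (predC b) dN.
  by rewrite (@eq_filter _ (predC (predC b)) b) // => y /=; rewrite negbK.
(* The gap between the start times of the blocks pays for the reordering. *)
have gain_h : 0 <= (tM - tN - total p X2) * total d X2.
  by apply: mulr_ge0; [lra | exact: total_ge0].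
have gain_i : 0 <= (tM - tN - total p N + total p X1) * - total d Y1.
  by apply: mulr_ge0; [have := total_p_ge0 X1; lra | rewrite oppr_ge0 total_le0].
rewrite PMN in moved_h gain_h *; lra.
Qed.

Lemma cost_exchange f r A B C D M N a b :
  all (fun x => r * p x <= f x) M -> all (fun x => f x <= r * p x) N ->
  total p C + total p N <= total p A ->
  total p C + total p (filter a M) <= total p A ->
  total p (filter a M) = total p (filter b N) ->
  cost f (A ++ filter (predC a) M ++ filter b N ++ B)
    + cost f (C ++ filter a M ++ filter (predC b) N ++ D)
  <= cost f (A ++ M ++ B) + cost f (C ++ N ++ D).
Proof.
move=> fM fN gapN gapM PMN.
set M' := filter (predC a) M ++ filter b N.
set N' := filter a M ++ filter (predC b) N.
have totalE g : total g M' + total g N' = total g M + total g N.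
  by rewrite !total_cat -(total_filterC g a M) -(total_filterC g b N); ring.
have PM' : total p M' = total p M by rewrite total_cat -PMN addrC total_filterC.
have PN' : total p N' = total p N by rewrite total_cat PMN total_filterC.
rewrite (catA (filter (predC a) M)) (catA (filter a M)) -/M' -/N'.
rewrite (cost_replace f A B PM') (cost_replace f C D PN').
pose d x := f x - r * p x.
have fE x : f x = r * p x + d x by rewrite /d addrC subrK.
have dM : all (fun x => 0 <= d x) M by apply: sub_all fM => x; rewrite subr_ge0.
have dN : all (fun x => d x <= 0) N by apply: sub_all fN => x; rewrite subr_le0.
have d_part := cost_from_exchange dM dN gapN gapM PMN.
rewrite !(cost_from_lin _ _ fE).
have p_part : cost_from (total p A) p M' + cost_from (total p C) p N'
    = cost_from (total p A) p M + cost_from (total p C) p N.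
  have := totalE (fun x => p x ^+ 2); rewrite /cost_from PM' PN'.
  have := cost_self M'; have := cost_self N'; have := cost_self M; have := cost_self N.
  rewrite PM' PN'; lra.
have := congr1 (GRing.mul r) p_part; rewrite !mulrDr; lra.
Qed.

End MachineCost.

Lemma cost_index (R : realDomainType) (T : eqType) (p f : T -> R) (s : seq T) :
  uniq s -> cost p f s = \sum_(j <- s) f j * total p (take (index j s).+1 s).
Proof.
elim: s => [|x s IH] /=; first by rewrite big_nil.
case/andP=> xs us; rewrite big_cons /= eqxx take0 IH //.
have delayed : \sum_(j <- s) f j * total p (take (index j (x :: s)).+1 (x :: s))
    = \sum_(j <- s) (f j * p x + f j * total p (take (index j s).+1 s)).
  apply: eq_big_seq => j js; have /negbTE xj : x != j by apply: contraNneq xs => ->.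
  by rewrite /= xj /= total_cons mulrDr.
rewrite delayed big_split -mulr_suml /= !total_cons /total big_nil; ring.
Qed.

Lemma count_mem_filter (T : eqType) (a : pred T) x s :
  count_mem x (filter a s) = (a x * count_mem x s)%N.
Proof.
rewrite count_filter; case ax: (a x); rewrite ?mul1n ?mul0n.
  by apply: eq_count => y /=; case: eqP => // ->; rewrite ax.
by rewrite -(count_pred0 s); apply: eq_count => y /=; case: eqP => // ->; rewrite ax.
Qed.

Lemma count_mem_gt0 (T : eqType) (x : T) s : (0 < count_mem x s)%N = (x \in s).
Proof. by rewrite -has_count has_pred1. Qed.

Lemma perm_filter_enum (T : finType) (A : {set T}) s :
  uniq s -> {subset A <= s} -> perm_eq [seq x <- s | x \in A] (enum A).
Proof.
move=> us As; apply: uniq_perm; [exact: filter_uniq | exact: enum_uniq | move=> x].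
by rewrite mem_filter mem_enum andb_idr //; apply: As.
Qed.

Section Schedules.
Variables (n m : nat) (p w : 'I_n -> nat).
Implicit Types (sigma : {ffun 'I_n -> 'I_m}) (s : seq 'I_n).

Local Notation pR := (fun j => (p j)%:R : rat).
Local Notation wR := (fun j => (w j)%:R : rat).

Definition lists_fibers (a : 'I_n -> 'I_m) (seqs : 'I_m -> seq 'I_n) : Prop :=
  forall (j : 'I_n) (k : 'I_m), count_mem j (seqs k) = (a j == k).

Lemma total_natE s : total pR s = (Pseq p s)%:R.
Proof. by rewrite /total /Pseq natr_sum. Qed.

Lemma wsum_cost a seqs : lists_fibers a seqs ->
  (wsum p w a seqs)%:R = \sum_k cost pR wR (seqs k) :> rat.
Proof.
move=> fib.
have fibE k x : (x \in seqs k) = (a x == k).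
  by rewrite -count_mem_gt0 fib; case: (a x == k).
have uniq_seqs k : uniq (seqs k) by apply: count_mem_uniq => x; rewrite fib fibE.
rewrite /wsum natr_sum (partition_big a xpredT) //=; apply: eq_bigr => k _.
have perm_fiber : perm_eq [seq j <- index_enum 'I_n | a j == k] (seqs k).
  apply: uniq_perm; rewrite ?filter_uniq ?index_enum_uniq // => x.
  by rewrite mem_filter mem_index_enum andbT fibE.
rewrite cost_index // -big_filter (perm_big _ perm_fiber) /=.
apply: eq_big_seq => j; rewrite fibE => /eqP <-.
by rewrite natrM /compl -total_natE.
Qed.

Lemma jobs_on_fibers sigma : lists_fibers sigma (jobs_on sigma).
Proof.
move=> j k; rewrite /jobs_on count_mem_filter count_uniq_mem ?enum_uniq //.
by rewrite mem_enum muln1.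
Qed.

Lemma uniq_jobs_on sigma k : uniq (jobs_on sigma k).
Proof. exact/filter_uniq/enum_uniq. Qed.

Lemma sorted_jobs_on sigma k : sorted (@Order.le _ 'I_n) (jobs_on sigma k).
Proof.
apply: sorted_filter; first exact: le_trans.
by have := iota_sorted 0 n; rewrite -val_enum_ord sorted_map.
Qed.

Lemma before_after sigma t k : before sigma t k ++ after sigma t k = jobs_on sigma k.
Proof.
have sorted_k := sorted_jobs_on sigma k.
rewrite /before /after (sorted_filter_le t sorted_k) (sorted_filter_gt t sorted_k).
exact: cat_take_drop.
Qed.


Hypothesis p_pos : forall j, (0 < p j)%N.

Lemma mul_le_weightE c j : (c * pR j <= wR j) = (c <= eratio p w j).
Proof. by rewrite /eratio ler_pdivlMr // ltr0n. Qed.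

Lemma weight_le_mulE c j : (wR j <= c * pR j) = (eratio p w j <= c).
Proof. by rewrite /eratio ler_pdivrMr // ltr0n. Qed.

Lemma Pseq_filter_le (a : pred 'I_n) s : (Pseq p (filter a s) <= Pseq p s)%N.
Proof. by rewrite /Pseq big_filter [leqRHS](bigID a) leq_addr. Qed.

Lemma Pseq_le_size s : (Pseq p s <= size s * pmax p)%N.
Proof.
elim: s => [|x s IH]; first by rewrite /Pseq big_nil.
by rewrite /Pseq big_cons mulSn leq_add // leq_bigmax.
Qed.

Section Swap.
Variables (sigma : {ffun 'I_n -> 'I_m}) (jstar : 'I_n) (h i : 'I_m).
Variables (H' I' : {set 'I_n}).
Hypothesis adm : admissible p sigma jstar h i.
Hypothesis valid : valid_choice p sigma jstar h i H' I'.

Local Notation beforeH := (before sigma jstar h).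
Local Notation headH := (take (size beforeH - 2 * pmax p) beforeH).
Local Notation blockH := (JH p sigma jstar h).
Local Notation blockI := (JI p sigma jstar i).
Local Notation tailI := (drop (2 * pmax p) (after sigma jstar i)).

Lemma pmax_gt0 : (0 < pmax p)%N.
Proof. exact: leq_trans (p_pos jstar) (leq_bigmax jstar). Qed.

Lemma swap_machines_neq : h != i.
Proof.
case: adm => _ _ gap; apply: contraTneq gap => ->.
by have := pmax_gt0; rewrite -ltnNge; lia.
Qed.

Lemma jobs_on_h : jobs_on sigma h = headH ++ blockH ++ after sigma jstar h.
Proof. by rewrite catA cat_take_drop before_after. Qed.

Lemma jobs_on_i : jobs_on sigma i = before sigma jstar i ++ blockI ++ tailI.
Proof. by rewrite cat_take_drop before_after. Qed.

Lemma blockH_le_jstar x : x \in blockH -> (x <= jstar)%N.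
Proof. by move/mem_drop; rewrite mem_filter => /andP[]. Qed.

Lemma blockI_gt_jstar x : x \in blockI -> (jstar < x)%N.
Proof. by move/mem_take; rewrite mem_filter => /andP[]. Qed.

Lemma blockH_on_h x : x \in blockH -> sigma x = h.
Proof. by move/mem_drop; rewrite !mem_filter => /and3P[_ /eqP]. Qed.

Lemma blockI_on_i x : x \in blockI -> sigma x = i.
Proof. by move/mem_take; rewrite !mem_filter => /and3P[_ /eqP]. Qed.

Lemma H'_sub x : x \in H' -> x \in blockH.
Proof. by case: valid => /subsetP subH _ _ _ _ /subH; rewrite inE. Qed.

Lemma I'_sub x : x \in I' -> x \in blockI.
Proof. by case: valid => _ /subsetP subI _ _ _ /subI; rewrite inE. Qed.

Lemma swap_seqs_h : swap_seqs p sigma jstar h i H' I' h =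
  headH ++ [seq x <- blockH | x \notin H'] ++ [seq x <- blockI | x \in I']
    ++ after sigma jstar h.
Proof. by rewrite /swap_seqs eqxx. Qed.

Lemma swap_seqs_i : swap_seqs p sigma jstar h i H' I' i =
  before sigma jstar i ++ [seq x <- blockH | x \in H']
    ++ [seq x <- blockI | x \notin I'] ++ tailI.
Proof. by rewrite /swap_seqs eq_sym (negbTE swap_machines_neq) eqxx. Qed.

Lemma swap_seqs_other k : k != h -> k != i ->
  swap_seqs p sigma jstar h i H' I' k = jobs_on sigma k.
Proof. by move=> kh ki; rewrite /swap_seqs (negbTE kh) (negbTE ki). Qed.

Lemma swap_assign_other j k : k != h -> k != i ->
  (swap_assign sigma h i H' I' j == k) = (sigma j == k).
Proof.
move=> kh ki; rewrite /swap_assign; case: ifP => [/H'_sub/blockH_on_h|_].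
  by move=> ->; rewrite ![_ == k]eq_sym (negbTE kh) (negbTE ki).
case: ifP => // /I'_sub/blockI_on_i ->.
by rewrite ![_ == k]eq_sym (negbTE kh) (negbTE ki).
Qed.

Lemma swap_fibers :
  lists_fibers (swap_assign sigma h i H' I') (swap_seqs p sigma jstar h i H' I').
Proof.
move=> j k; have hi := swap_machines_neq; have ih : i != h by rewrite eq_sym.
have [/orP k_hi | k_other] := boolP ((k == h) || (k == i)); last first.
  rewrite negb_or in k_other; case/andP: k_other => kh ki.
  by rewrite swap_seqs_other // jobs_on_fibers swap_assign_other.
have cH := jobs_on_fibers sigma j h; rewrite jobs_on_h !count_cat in cH.
have cI := jobs_on_fibers sigma j i; rewrite jobs_on_i !count_cat in cI.
rewrite /swap_assign; case jH : (j \in H'); [|case jI : (j \in I')].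
- have sj := blockH_on_h (H'_sub jH).
  have jI : (j \in I') = false.
    by apply: contraTF hi => /I'_sub/blockI_on_i si; rewrite negbK -si sj.
  (* [/=] unfolds [Equality.sort], so that [lia] sees the atoms of [cH]. *)
  have /= pos : (0 < count_mem j blockH)%N by rewrite count_mem_gt0 H'_sub.
  rewrite sj ?eqxx ?(negbTE hi) /= in cH cI.
  by case: k_hi => /eqP ->; rewrite ?swap_seqs_h ?swap_seqs_i !count_cat
    !(count_mem_filter _ _ blockH) !(count_mem_filter _ _ blockI) jH jI
    ?eqxx ?(negbTE hi) /=; lia.
- have sj := blockI_on_i (I'_sub jI).
  have /= pos : (0 < count_mem j blockI)%N by rewrite count_mem_gt0 I'_sub.
  rewrite sj ?eqxx ?(negbTE ih) /= in cH cI.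
  by case: k_hi => /eqP ->; rewrite ?swap_seqs_h ?swap_seqs_i !count_cat
    !(count_mem_filter _ _ blockH) !(count_mem_filter _ _ blockI) jH jI
    ?eqxx ?(negbTE ih) /=; lia.
- by case: k_hi => /eqP ->; rewrite ?swap_seqs_h ?swap_seqs_i !count_cat
    !(count_mem_filter _ _ blockH) !(count_mem_filter _ _ blockI) jH jI /=
    mul1n mul0n add0n.
Qed.

Lemma load_gaps :
  (Pseq p (before sigma jstar i) + Pseq p blockI <= Pseq p headH)%N /\
  (Pseq p (before sigma jstar i) + Pseq p [seq x <- blockH | x \in H'] <= Pseq p headH)%N.
Proof.
case: adm => _ sizeI gap.
have headE : (Pseq p headH + Pseq p blockH = Pseq p beforeH)%N.
  by rewrite /Pseq -big_cat cat_take_drop.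
have PH : (Pseq p blockH <= 2 * pmax p * pmax p)%N.
  by rewrite (leq_trans (Pseq_le_size _)) // leq_mul2r size_drop; lia.
have PI : (Pseq p blockI <= 2 * pmax p * pmax p)%N.
  by rewrite (leq_trans (Pseq_le_size _)) // size_takel.
have PH' : (Pseq p [seq x <- blockH | x \in H'] <= Pseq p blockH)%N.
  exact: Pseq_filter_le.
by move: gap; rewrite -mulnn; nia.
Qed.

Lemma load_H'_I' :
  Pseq p [seq x <- blockH | x \in H'] = Pseq p [seq x <- blockI | x \in I'].
Proof.
have uniqH : uniq blockH by apply/drop_uniq/filter_uniq/uniq_jobs_on.
have uniqI : uniq blockI by apply/take_uniq/filter_uniq/uniq_jobs_on.
case: valid => _ _ _ _; rewrite /Pseq (perm_big _ (perm_filter_enum uniqH H'_sub)).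
by rewrite (perm_big _ (perm_filter_enum uniqI I'_sub)).
Qed.

Hypothesis e_sorted : forall j k : 'I_n, (j <= k)%N -> eratio p w k <= eratio p w j.

Lemma blockH_ratio : all (fun x => eratio p w jstar * pR x <= wR x) blockH.
Proof. by apply/allP => x /blockH_le_jstar/e_sorted; rewrite mul_le_weightE. Qed.

Lemma blockI_ratio : all (fun x => wR x <= eratio p w jstar * pR x) blockI.
Proof. by apply/allP => x /blockI_gt_jstar/ltnW/e_sorted; rewrite weight_le_mulE. Qed.

Lemma swap_machines_cost :
  cost pR wR (swap_seqs p sigma jstar h i H' I' h)
    + cost pR wR (swap_seqs p sigma jstar h i H' I' i)
  <= cost pR wR (jobs_on sigma h) + cost pR wR (jobs_on sigma i).
Proof.
have [gapI gapH'] := load_gaps.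
rewrite swap_seqs_h swap_seqs_i jobs_on_h jobs_on_i.
apply: (cost_exchange (a := mem H') (b := mem I') _ _ _ blockH_ratio blockI_ratio)
  => [x|||].
- exact: ler0n.
- by move: gapI; rewrite -(ler_nat rat) natrD -!total_natE; apply.
- by move: gapH'; rewrite -(ler_nat rat) natrD -!total_natE; apply.
- by have := congr1 (fun k => k%:R : rat) load_H'_I'; rewrite -!total_natE; apply.
Qed.

End Swap.
End Schedules.

Unset Implicit Arguments.

Theorem lemma5 (n m : nat) (p w : 'I_n -> nat)
  (p_pos : forall j : 'I_n, (0 < p j)%N)
  (e_sorted : forall j k : 'I_n, (j <= k)%N -> (eratio p w k <= eratio p w j)%R)
  (sigma : {ffun 'I_n -> 'I_m}) (jstar : 'I_n) (h i : 'I_m)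
  (H' I' : {set 'I_n}) :
  admissible p sigma jstar h i ->
  valid_choice p sigma jstar h i H' I' ->
  (wsum p w (swap_assign sigma h i H' I') (swap_seqs p sigma jstar h i H' I')
   <= wsum p w sigma (jobs_on sigma))%N.
Proof.
move=> adm valid; have hi := swap_machines_neq p_pos adm.
have split_hi (F : 'I_m -> rat) :
    \sum_k F k = F h + F i + \sum_(k | (k != h) && (k != i)) F k.
  by rewrite (bigD1 h) // (bigD1 i) 1?eq_sym //= addrA.
rewrite -(ler_nat rat) (wsum_cost p w (jobs_on_fibers sigma)).
rewrite (wsum_cost p w (swap_fibers p_pos adm valid)).
rewrite !split_hi.
under eq_bigr => k /andP[kh ki] do rewrite swap_seqs_other //.
by rewrite lerD2r (swap_machines_cost p_pos adm valid e_sorted).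
Qed.
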